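(* Let $(V,\ell)$ be an $L_\infty$-algebra with finite-dimensional components, $V_0=\mathbb{R}^n$, such that $H^1(V,\ell)=0$, and let $h_1:V_1\to V_0$, $h_2:V_2\to V_1$ be linear maps with $\ell_1\circ h_1+h_2\circ\ell_1=\mathrm{id}_{V_1}$. Let $u_0=0$ and $u_1\in\ker(\ell_1|_{V_0})$, and define recursively $u_{k+1}=-h_1(Obs^k)$ for $k\geq1$, where $Obs^k=\sum_{i=2}^{k+1}\sum_{\vec r_i=k+1}\binom{k+1}{\vec r_i}\frac1{i!}\ell_i(u_{r_1},\ldots,u_{r_i})$. Then $u[\![t]\!]=\sum_{k\geq0}\frac{u_k}{k!}t^k\in\mathbb{R}^n[\![t]\!]$ is a formal Maurer–Cartan element.
   Context: An $L_\infty$-algebra is a sequence $\ell=(\ell_k)_{k\geq0}$ of graded symmetric $k$-linear degree-$1$ maps $\ell_k:V^{\times k}\to V$, $\ell_0=0$, satisfying the $L_\infty$ Jacobi identities; $H^1(V,\ell)=\ker(\ell_1:V_1\to V_2)/\operatorname{im}(\ell_1:V_0\to V_1)$. $\sum_{\vec r_i=m}$ sums over tuples $(r_1,\ldots,r_i)$ of positive integers with sum $m$ and $\binom{k+1}{\vec r_i}=\frac{(k+1)!}{r_1!\cdots r_i!}$. A formal Maurer–Cartan element is a Maurer–Cartan element of $V[\![t]\!]$ with $t$-linearly extended $\ell_k$; for $u[\![t]\!]=\sum\frac{u_k}{k!}t^k$ with $u_0=0$ this means $\ell_1(u_{k+1})+\sum_{i=2}^{k+1}\sum_{\vec r_i=k+1}\binom{k+1}{\vec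 r_i}\frac1{i!}\ell_i(u_{r_1},\ldots,u_{r_i})=0$ for all $k\geq0$. *)

From HB Require Import structures.
From mathcomp Require Import all_boot all_order all_algebra.
From mathcomp Require Import reals.
Set Implicit Arguments. Unset Strict Implicit. Unset Printing Implicit Defensive.
Import Order.TTheory GRing.Theory Num.Theory.
Local Open Scope ring_scope.

(* A graded real vector space with finite-dimensional components:
   V_i = 'rV[R]_(d i) for every integer degree i.
   Homogeneous elements are pairs (degree, vector). *)
Definition Linf_hom (R : realType) (d : int -> nat) := {i : int & 'rV[R]_(d i)}.

Definition hdeg (R : realType) d (h : Linf_hom R d) : int := projT1 h.

Definition hmk (R : realType) d (i : int) (v : 'rV[R]_(d i)) : Linf_hom R d :=
  existT (fun j => 'rV[R]_(d j)) i v.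

(* component of a homogeneous element in degree D (0 if of another degree) *)
Definition hval (R : realType) d (D : int) (h : Linf_hom R d) : 'rV[R]_(d D) :=
  match h with
  | existT i v =>
      match i =P D with
      | ReflectT e => eq_rect i (fun j => 'rV[R]_(d j)) v D e
      | ReflectF _ => 0
      end
  end.

Definition degsum (R : realType) d (s : seq (Linf_hom R d)) : int := \sum_(x <- s) hdeg x.

Definition ksgn (R : realType) (a b : int) : R :=
  if odd `|a|%N && odd `|b|%N then -1 else 1.

(* Koszul sign of the unshuffle sending s to (mask m s) ++ (mask (~m) s) *)
Definition unshuffle_sign (R : realType) d (s : seq (Linf_hom R d)) (m : seq bool) : R :=
  \prod_(p < size s) \prod_(q < size s | (p < q)%N && ~~ nth false m p && nth false m q)
     ksgn R (hdeg (nth (hmk (0 : 'rV[R]_(d 0))) s p))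
            (hdeg (nth (hmk (0 : 'rV[R]_(d 0))) s q)).

(* ell s = ell_k(s) with k = size s, applied to homogeneous arguments.
   L_infinity algebra (symmetric convention, all ell_k of degree 1). *)
Definition is_Linf (R : realType) d (ell : seq (Linf_hom R d) -> Linf_hom R d) : Prop :=
  [/\
      (forall s, hdeg (ell s) = degsum s + 1),
      hval 1 (ell [::]) = 0,
      (forall (a b : seq (Linf_hom R d)) (i D : int) (c : R) (v w : 'rV[R]_(d i)),
          hval D (ell (a ++ hmk (c *: v + w) :: b)) =
          c *: hval D (ell (a ++ hmk v :: b)) + hval D (ell (a ++ hmk w :: b))),
      (* graded symmetry (generated by adjacent transpositions) *)
      (forall (a b : seq (Linf_hom R d)) (x y : Linf_hom R d) (D : int),
          hval D (ell (a ++ y :: x :: b)) =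
          ksgn R (hdeg x) (hdeg y) *: hval D (ell (a ++ x :: y :: b)))
    &
      (forall s : seq (Linf_hom R d), (0 < size s)%N ->
          \sum_(m : (size s).-tuple bool | (0 < count id m)%N)
            unshuffle_sign s m *:
              hval (degsum s + 2) (ell (ell (mask m s) :: mask (map negb m) s)) = 0)].

Definition l1_01 (R : realType) d (ell : seq (Linf_hom R d) -> Linf_hom R d) (x : 'rV[R]_(d 0)) : 'rV[R]_(d 1) :=
  hval 1 (ell [:: hmk x]).
Definition l1_12 (R : realType) d (ell : seq (Linf_hom R d) -> Linf_hom R d) (x : 'rV[R]_(d 1)) : 'rV[R]_(d 2) :=
  hval 2 (ell [:: hmk x]).

Definition H1_vanishes (R : realType) d (ell : seq (Linf_hom R d) -> Linf_hom R d) : Prop :=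
  forall y : 'rV[R]_(d 1), l1_12 ell y = 0 -> exists x, l1_01 ell x = y.

Definition multinom (R : realType) (N : nat) (r : seq nat) : R :=
  (N`!)%:R / \prod_(x <- r) (x`!)%:R.

Definition Obs (R : realType) d (ell : seq (Linf_hom R d) -> Linf_hom R d) (u : nat -> 'rV[R]_(d 0)) (k : nat)
  : 'rV[R]_(d 1) :=
  \sum_(2 <= i < k.+2)
    \sum_(r : i.-tuple 'I_k.+2 |
           all (fun x : nat => (0 < x)%N) (map (@nat_of_ord k.+2) r) &&
           (\sum_(x <- (map (@nat_of_ord k.+2) r)) x == k.+1)%N)
      (multinom R k.+1 (map (@nat_of_ord k.+2) r) / (i`!)%:R) *:
        hval 1 (ell [seq hmk (u (nat_of_ord x)) | x <- r]).

Definition formal_MC (R : realType) d (ell : seq (Linf_hom R d) -> Linf_hom R d) (u : nat -> 'rV[R]_(d 0)) : Prop :=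
  u 0%N = 0 /\ forall k : nat, l1_01 ell (u k.+1) + Obs ell u k = 0.

From HB Require Import structures.
From mathcomp Require Import all_boot all_order all_algebra.
From mathcomp Require Import reals ring.
Set Implicit Arguments. Unset Strict Implicit. Unset Printing Implicit Defensive.
Import Order.TTheory GRing.Theory Num.Theory.
Local Open Scope ring_scope.

(* Let F(t) = sum_i l_i(u(t), ..., u(t)) / i! be the curvature of u(t) = sum_k u_k t^k / k!;
   (k+1)! times its t^(k+1)-coefficient is l_1(u_(k+1)) + Obs^k.  Since all u_k have degree 0,
   the Jacobi identities, summed over all lists of u's with multinomial weights, give the
   coefficientwise form of l_1(F) + sum_j l_(j+1)(F, u, ..., u) / j! = 0.  Arguing by induction
   on N, all coefficients of F below t^N vanish and u_0 = 0, so only l_1 of the t^N-coefficient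
   survives: Obs^(N-1) is a cocycle, as l_1 l_1 u_N = 0.  The homotopy
   l_1 h_1 + h_2 l_1 = id then shows that u_N = -h_1(Obs^(N-1)) solves l_1(u_N) = -Obs^(N-1). *)

Section SeqSum.
Variable V : zmodType.

Fixpoint seqsum (T : finType) (n : nat) (F : seq T -> V) : V :=
  if n is n'.+1 then \sum_(x : T) seqsum n' (fun s => F (x :: s)) else F [::].

Lemma eq_seqsum (T : finType) n (F G : seq T -> V) :
  (forall s, size s = n -> F s = G s) -> seqsum n F = seqsum n G.
Proof.
elim: n F G => [|n IH] F G eqFG /=; first exact: eqFG.
by apply: eq_bigr => x _; apply: IH => s sz_s; apply: eqFG; rewrite /= sz_s.
Qed.

Lemma seqsum_eq0 (T : finType) n (F : seq T -> V) :
  (forall s, size s = n -> F s = 0) -> seqsum n F = 0.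
Proof.
elim: n F => [|n IH] F F0 /=; first exact: F0.
by apply: big1 => x _; apply: IH => s sz_s; apply: F0; rewrite /= sz_s.
Qed.

Lemma seqsum_sumr (T : finType) (I : Type) (r : seq I) (P : pred I) n
    (F : I -> seq T -> V) :
  seqsum n (fun s => \sum_(i <- r | P i) F i s) = \sum_(i <- r | P i) seqsum n (F i).
Proof.
elim: n F => [|n IH] F //=.
by under eq_bigr => x _ do rewrite IH; rewrite exchange_big.
Qed.

Lemma exchange_seqsum (T1 T2 : finType) n1 n2 (F : seq T1 -> seq T2 -> V) :
  seqsum n1 (fun a => seqsum n2 (F a)) = seqsum n2 (fun b => seqsum n1 (F^~ b)).
Proof.
elim: n2 F => [|n2 IH] F //=.
by rewrite seqsum_sumr; apply: eq_bigr => x _; apply: IH.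
Qed.

Lemma big_tuple_seqsum (T : finType) n (F : seq T -> V) :
  \sum_(t : n.-tuple T) F t = seqsum n F.
Proof.
elim: n F => [|n IH] F /=.
  by rewrite (big_pred1 [tuple]) // => t; rewrite [t]tuple0; apply/esym/eqP.
rewrite (reindex (fun p : T * n.-tuple T => [tuple of p.1 :: p.2])) /=.
  rewrite -(pair_big xpredT xpredT (fun x (t : n.-tuple T) => F (x :: t))) /=.
  by apply: eq_bigr => x _; rewrite -IH.
exists (fun t : n.+1.-tuple T => (thead t, [tuple of behead t])).
  by case=> x t _; rewrite /= theadE; congr pair; apply: val_inj.
by move=> t _; rewrite [in RHS](tuple_eta t).
Qed.

Lemma seqsum_mask (T : finType) (m : seq bool) (G : seq T -> seq T -> V) :
  seqsum (size m) (fun r => G (mask m r) (mask (map negb m) r)) =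
  seqsum (count id m) (fun a => seqsum (count negb m) (G a)).
Proof.
elim: m G => [|[] m IH] G //=.
  by apply: eq_bigr => x _; apply: (IH (fun a => G (x :: a))).
rewrite seqsum_sumr; apply: eq_bigr => x _.
exact: (IH (fun a b => G a (x :: b))).
Qed.

Lemma seqsum_count n (g : nat -> V) :
  seqsum n (fun m : seq bool => g (count id m)) = \sum_(0 <= i < n.+1) g i *+ 'C(n, i).
Proof.
elim: n g => [|n IH] g /=; first by rewrite big_nat1.
rewrite big_bool /= (IH (fun i => g i.+1)) (IH g) [RHS]big_ltn // big_add1 /= bin0 mulr1n.
under [in RHS]eq_bigr => i _ do rewrite binS mulrnDr.
rewrite big_split /= addrA [LHS]addrC; congr (_ + _).
by rewrite big_ltn // big_add1 /= bin0 mulr1n [in RHS]big_nat_recr //= bin_small // mulr0n addr0.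
Qed.

End SeqSum.

Lemma raddf_seqsum (T : finType) (V W : zmodType) (f : {additive V -> W}) n
    (F : seq T -> V) :
  f (seqsum n F) = seqsum n (fun s => f (F s)).
Proof.
elim: n F => [|n IH] F //=.
by rewrite raddf_sum; apply: eq_bigr => x _; apply: IH.
Qed.

Lemma scaler_seqsum (T : finType) (R : pzRingType) (V : lmodType R) (c : R) n
    (F : seq T -> V) :
  c *: seqsum n F = seqsum n (fun s => c *: F s).
Proof. exact: (raddf_seqsum ( *:%R c)). Qed.

Definition natseqsum (V : zmodType) (M n : nat) (F : seq nat -> V) : V :=
  seqsum n (fun s : seq 'I_M => F (map val s)).

Lemma natseqsum_widen (V : zmodType) M1 M2 n (F : seq nat -> V) :
  (M1 <= M2)%N -> (forall s, ~~ all (fun x => x < M1)%N s -> F s = 0) ->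
  natseqsum M2 n F = natseqsum M1 n F.
Proof.
move=> leM12; elim: n F => [|n IH] F F0 //.
pose G x := natseqsum M1 n (fun s => F (x :: s)).
rewrite /natseqsum /= (eq_bigr (G \o val)) => [|x _]; last first.
  by apply: IH => s out_s; apply: F0; rewrite /= negb_and out_s orbT.
rewrite -(big_mkord xpredT G) -(big_mkord xpredT (fun x => G x)).
rewrite (@big_cat_nat _ _ _ M1 0 M2 _ _ (leq0n M1) leM12) /=.
rewrite [X in _ + X]big_nat_cond [X in _ + X]big1 ?addr0 //.
move=> x /andP[/andP[geM1 _] _]; apply: seqsum_eq0 => s _; apply: F0.
by rewrite /= negb_and -leqNgt geM1.
Qed.

Lemma big_nat_triangle (R : Type) (idx : R) (op : Monoid.com_law idx) B
    (F : nat -> nat -> R) :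
  \big[op/idx]_(0 <= n < B) \big[op/idx]_(0 <= i < n.+1) F i (n - i)%N =
  \big[op/idx]_(0 <= i < B) \big[op/idx]_(0 <= j < B | (i + j < B)%N) F i j.
Proof.
transitivity (\big[op/idx]_(0 <= n < B) \big[op/idx]_(0 <= i < B | (i <= n)%N) F i (n - i)%N).
  apply: eq_big_nat => n /andP[_ ltnB].
  by rewrite (big_nat_widen _ _ _ _ _ ltnB); apply: eq_bigl => i; rewrite ltnS.
rewrite (exchange_big_dep xpredT) //=; apply: eq_big_nat => i /andP[_ ltiB].
rewrite (@big_cat_nat _ _ _ i 0 B _ _ (leq0n i) (ltnW ltiB)) /= big_nat_cond big_pred0; last first.
  by move=> n /=; rewrite ltnNge andNb.
rewrite Monoid.simpm -{1}(add0n i) big_addn.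
rewrite (big_nat_widen _ _ _ _ _ (leq_subr i B)).
by apply: eq_big => [j | j _]; rewrite ?leq_addl ?ltn_subRL ?addnK.
Qed.

Lemma perm_mask_cat (T : eqType) (m : seq bool) (r : seq T) :
  size m = size r -> perm_eq r (mask m r ++ mask (map negb m) r).
Proof.
elim: r m => [|x r IH] [|[] m] //= [/IH perm_r]; first by rewrite perm_cons.
by rewrite perm_sym -cat1s perm_catCA /= perm_cons perm_sym.
Qed.

Lemma sumn_lt_size_mem0 (s : seq nat) : (sumn s < size s)%N -> 0%N \in s.
Proof.
elim: s => [|[|x] s IH] //= lt_s; rewrite ?mem_head // inE IH //.
by move: lt_s; rewrite addSn ltnS => /(leq_ltn_trans (leq_addl _ _)).
Qed.

Lemma mem_leq_sumn (s : seq nat) x : x \in s -> (x <= sumn s)%N.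
Proof. by move/perm_to_rem/perm_sumn => /= ->; apply: leq_addr. Qed.

Lemma natr_fact_neq0 (R : numDomainType) n : (n`!)%:R != 0 :> R.
Proof. by rewrite pnatr_eq0 -lt0n fact_gt0. Qed.

Section MultinomialCoefficients.
Variable R : realType.

Definition multinom_coef (p : nat) (s : seq nat) : R :=
  if sumn s == p then multinom R p s else 0.

Lemma perm_multinom_coef p s1 s2 :
  perm_eq s1 s2 -> multinom_coef p s1 = multinom_coef p s2.
Proof.
by move=> eq12; rewrite /multinom_coef /multinom (perm_sumn eq12) (perm_big _ eq12).
Qed.

Lemma mem0_multinom_coef p s :
  (p < size s)%N -> multinom_coef p s != 0 -> 0%N \in s.
Proof.
rewrite /multinom_coef; case: (sumn s =P p) => [<- /sumn_lt_size_mem0 // | _ _].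
by rewrite eqxx.
Qed.

Lemma multinom_coef_cat N a b :
  multinom_coef N (a ++ b) =
  \sum_(p < N.+1) 'C(N, p)%:R * (multinom_coef p a * multinom_coef (N - p) b).
Proof.
rewrite /multinom_coef /multinom sumn_cat big_cat /=.
case: (sumn a + sumn b =P N)%N => [sumN | sumN]; last first.
  apply/esym/big1 => p _; case: (sumn a =P p) => [sum_a|]; last by rewrite mul0r mulr0.
  case: (sumn b =P N - p)%N => [sum_b|]; last by rewrite !mulr0.
  by exfalso; apply: sumN; rewrite sum_b sum_a subnKC // -ltnS.
have lt_a : (sumn a < N.+1)%N by rewrite -sumN ltnS leq_addr.
rewrite (bigD1 (Ordinal lt_a)) //= [X in _ + X]big1 ?addr0 => [|p /eqP ne_p]; last first.
  case: (sumn a =P p) => [sum_a|]; last by rewrite mul0r mulr0.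
  by case: ne_p; apply: val_inj.
rewrite -sumN addKn !eqxx -(bin_fact (leq_addr (sumn b) (sumn a))) addKn !natrM.
by rewrite invfM; ring.
Qed.

End MultinomialCoefficients.

Lemma hval_hmk (R : realType) d (D : int) (v : 'rV[R]_(d D)) : hval D (hmk v) = v.
Proof. by rewrite /hval /hmk; case: (D =P D) => // e; rewrite (eq_irrelevance e erefl). Qed.

Lemma hmk_hval (R : realType) d (h : Linf_hom R d) D : hdeg h = D -> h = hmk (hval D h).
Proof.
by case: h => i v /= <-; change (hmk v = hmk (hval i (hmk v))); rewrite hval_hmk.
Qed.

Section FormalMaurerCartan.
Variables (R : realType) (d : int -> nat) (ell : seq (Linf_hom R d) -> Linf_hom R d).
Variable u : nat -> 'rV[R]_(d 0).
Hypotheses (ellL : is_Linf ell) (u0 : u 0%N = 0).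

Lemma hval_ell_cons0 a b i D : hval D (ell (a ++ hmk (0 : 'rV[R]_(d i)) :: b)) = 0.
Proof.
case: ellL => _ _ ell_lin _ _.
have := ell_lin a b i D 1 0 0; rewrite scaler0 addr0 scale1r => /esym/eqP.
by rewrite -subr_eq0 addrK => /eqP.
Qed.

Lemma l1_01_is_linear : linear (l1_01 ell).
Proof. by case: ellL => _ _ ell_lin _ _ c v w; apply: (ell_lin [::] [::]). Qed.

HB.instance Definition _ := GRing.isLinear.Build R _ _ _ (l1_01 ell) l1_01_is_linear.

Lemma l1_12_is_linear : linear (l1_12 ell).
Proof. by case: ellL => _ _ ell_lin _ _ c v w; apply: (ell_lin [::] [::]). Qed.

HB.instance Definition _ := GRing.isLinear.Build R _ _ _ (l1_12 ell) l1_12_is_linear.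

Definition ell_u (s : seq nat) : 'rV[R]_(d 1) :=
  hval 1 (ell [seq hmk (u j) | j <- s]).

Definition ell_yu (s : seq nat) (y : 'rV[R]_(d 1)) : 'rV[R]_(d 2) :=
  hval 2 (ell (hmk y :: [seq hmk (u j) | j <- s])).

Lemma ell_yu_is_linear s : linear (ell_yu s).
Proof. by case: ellL => _ _ ell_lin _ _ c v w; apply: (ell_lin [::]). Qed.

HB.instance Definition _ s :=
  GRing.isLinear.Build R _ _ _ (ell_yu s) (ell_yu_is_linear s).

Lemma ell_u_nil : ell_u [::] = 0.
Proof. by case: ellL. Qed.

Lemma ell_u_mem0 s : 0%N \in s -> ell_u s = 0.
Proof. by case/splitPr => s1 s2; rewrite /ell_u map_cat /= u0 hval_ell_cons0. Qed.

Lemma ell_yu_mem0 s y : 0%N \in s -> ell_yu s y = 0.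
Proof.
by case/splitPr => s1 s2; rewrite /ell_yu map_cat /= u0 -cat_cons hval_ell_cons0.
Qed.

Lemma ell_u_jacobi s :
  seqsum (size s) (fun m => ell_yu (mask (map negb m) s) (ell_u (mask m s))) = 0.
Proof.
have [/size0nil -> | s_gt0] := posnP (size s); first by rewrite /= ell_u_nil raddf0.
case: ellL => ell_deg _ _ _ ell_jac.
pose us := [seq hmk (u j) | j <- s].
have deg_us p : hdeg (nth (hmk (0 : 'rV[R]_(d 0))) us p) = 0.
  by rewrite /us; elim: (s) p => [|x s' IH] [|p] //=.
have := ell_jac us; rewrite size_map => /(_ s_gt0).
rewrite /degsum big_map big1 // add0r => jac.
rewrite -big_tuple_seqsum (bigID (fun m : (size s).-tuple bool => 0 < count id m)%N) /=.
rewrite [X in _ + X]big1 ?addr0 => [|m]; last first.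
  rewrite lt0n negbK => /eqP m0.
  by rewrite (@size0nil _ (mask m s)) ?ell_u_nil ?raddf0 // size_mask ?size_tuple.
rewrite -[RHS]jac; apply: eq_bigr => m _.
rewrite /unshuffle_sign big1 ?scale1r => [|p _]; last first.
  by rewrite big1 // => q _; rewrite !deg_us.
rewrite /us -!map_mask [ell (map _ (mask m s))](hmk_hval (D := 1)) //.
by rewrite ell_deg /degsum big_map big1.
Qed.

Lemma multinom_coef_ell_u p a : (p < size a)%N -> multinom_coef R p a *: ell_u a = 0.
Proof.
move=> lt_pa; have [-> | /(mem0_multinom_coef lt_pa)/ell_u_mem0 ->] :=
  eqVneq (multinom_coef R p a) 0; by rewrite ?scale0r ?scaler0.
Qed.

Lemma multinom_coef_ell_yu p b y :
  (p < size b)%N -> multinom_coef R p b *: ell_yu b y = 0.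
Proof.
move=> lt_pb; have [-> | /(mem0_multinom_coef lt_pb)/ell_yu_mem0 ->] :=
  eqVneq (multinom_coef R p b) 0; by rewrite ?scale0r ?scaler0.
Qed.

(* p! times the t^p-coefficient of the curvature sum_i l_i(u(t), ..., u(t)) / i!, with the
   arities i truncated below B and the indices of the u's below M. *)
Definition curv (M B p : nat) : 'rV[R]_(d 1) :=
  \sum_(0 <= i < B) (i`!%:R)^-1 *: natseqsum M i (fun a => multinom_coef R p a *: ell_u a).

Lemma curv0 M B : curv M B 0 = 0.
Proof.
apply: big1 => i _; rewrite /natseqsum seqsum_eq0 ?scaler0 // => s _.
by case: s => [|x s]; [rewrite ell_u_nil scaler0 | apply: multinom_coef_ell_u].
Qed.

(* N! times the t^N-coefficient of l_(j+1)(l_i(u(t), ..., u(t)), u(t), ..., u(t)), with the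
   indices of the u's truncated below M. *)
Definition nested_bracket (N M i j : nat) : 'rV[R]_(d 2) :=
  natseqsum M i (fun a => natseqsum M j (fun b =>
    multinom_coef R N (a ++ b) *: ell_yu b (ell_u a))).

Lemma nested_bracket_eq0 N M i j : (N < i + j)%N -> nested_bracket N M i j = 0.
Proof.
move=> lt_N; apply: seqsum_eq0 => a sz_a; apply: seqsum_eq0 => b sz_b.
have [-> | ] := eqVneq (multinom_coef R N (map val a ++ map val b)) 0.
  by rewrite scale0r.
move/(mem0_multinom_coef _); rewrite size_cat !size_map sz_a sz_b => /(_ lt_N).
rewrite mem_cat => /orP[/ell_u_mem0 -> | /ell_yu_mem0 ->].
  by rewrite raddf0 scaler0.
by rewrite scaler0.
Qed.

(* The Jacobi identities for the lists r of n indices, weighted by multinomial coefficients: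
   an unshuffle of r splits it into an i-list and an (n - i)-list. *)
Lemma nested_bracket_antidiagonal N M n :
  \sum_(0 <= i < n.+1) ((i`!%:R)^-1 * ((n - i)`!%:R)^-1) *: nested_bracket N M i (n - i) = 0.
Proof.
have split_mask (m : seq bool) : size m = n ->
    nested_bracket N M (count id m) (n - count id m) =
    natseqsum M n (fun r =>
      multinom_coef R N r *: ell_yu (mask (map negb m) r) (ell_u (mask m r))).
  move=> <-; have -> : (size m - count id m)%N = count negb m.
    by rewrite -(count_predC id m) addKn.
  rewrite /nested_bracket /natseqsum -(seqsum_mask m (fun a b : seq 'I_M =>
    multinom_coef R N (map val a ++ map val b) *: ell_yu (map val b) (ell_u (map val a)))).
  apply: eq_seqsum => r sz_r.
  by rewrite !map_mask -(perm_multinom_coef _ _ (perm_mask_cat _)) // size_map.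
rewrite (eq_big_nat _ _
    (F2 := fun i => (n`!%:R)^-1 *: (nested_bracket N M i (n - i) *+ 'C(n, i))))
  => [|i /andP[_ /ltnSE le_in]]; last first.
  rewrite -scaler_nat scalerA -(bin_fact le_in) !natrM.
  by congr (_ *: _); field; rewrite !natr_fact_neq0 pnatr_eq0 -lt0n bin_gt0.
rewrite -scaler_sumr -seqsum_count (eq_seqsum (G := fun m => natseqsum M n (fun r =>
    multinom_coef R N r *: ell_yu (mask (map negb m) r) (ell_u (mask m r)))))
  => [|m /split_mask //].
rewrite /natseqsum exchange_seqsum seqsum_eq0 ?scaler0 // => r sz_r.
by rewrite -scaler_seqsum -sz_r -(size_map val) ell_u_jacobi scaler0.
Qed.

Lemma nested_bracket_sum N M :
  \sum_(0 <= i < N.+1) \sum_(0 <= j < N.+1)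
    ((i`!%:R)^-1 * (j`!%:R)^-1) *: nested_bracket N M i j = 0.
Proof.
pose F i j := ((i`!%:R)^-1 * (j`!%:R)^-1) *: nested_bracket N M i j.
transitivity (\sum_(0 <= i < N.+1) \sum_(0 <= j < N.+1 | (i + j < N.+1)%N) F i j).
  apply: eq_big_nat => i _; rewrite [RHS]big_mkcond; apply: eq_big_nat => j _.
  by case: ifP => // /negbT; rewrite -leqNgt => lt_N; rewrite nested_bracket_eq0 ?scaler0.
by rewrite -big_nat_triangle big1_seq // => n _; apply: nested_bracket_antidiagonal.
Qed.

Lemma nested_bracket_curv N M B :
  \sum_(0 <= i < B) \sum_(0 <= j < B)
    ((i`!%:R)^-1 * (j`!%:R)^-1) *: nested_bracket N M i j =
  \sum_(p < N.+1) 'C(N, p)%:R *: \sum_(0 <= j < B) (j`!%:R)^-1 *: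
    natseqsum M j (fun b => multinom_coef R (N - p) b *: ell_yu b (curv M B p)).
Proof.
pose K (p i j : nat) (a b : seq 'I_M) :=
  ('C(N, p)%:R * ((i`!%:R)^-1 * (j`!%:R)^-1) *
     (multinom_coef R p (map val a) * multinom_coef R (N - p) (map val b)))
  *: ell_yu (map val b) (ell_u (map val a)).
transitivity (\sum_(p < N.+1) \sum_(0 <= i < B) \sum_(0 <= j < B)
  seqsum i (fun a => seqsum j (K p i j a))).
  rewrite [RHS]exchange_big; apply: eq_bigr => i _.
  rewrite [RHS]exchange_big; apply: eq_bigr => j _.
  rewrite -seqsum_sumr /nested_bracket /natseqsum scaler_seqsum; apply: eq_seqsum => a _.
  rewrite -seqsum_sumr scaler_seqsum; apply: eq_seqsum => b _.
  rewrite multinom_coef_cat scaler_suml scaler_sumr; apply: eq_bigr => p _.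
  by rewrite scalerA; congr (_ *: _); ring.
apply: eq_bigr => p _; rewrite exchange_big scaler_sumr; apply: eq_bigr => j _.
under eq_bigr => i _ do rewrite exchange_seqsum.
rewrite scalerA /natseqsum scaler_seqsum -seqsum_sumr.
apply: eq_seqsum => b _; rewrite /curv linear_sum /= !scaler_sumr; apply: eq_bigr => i _.
rewrite [ell_yu _ (_ *: _)]linearZ_LR /natseqsum raddf_seqsum /= !scaler_seqsum.
apply: eq_seqsum => a _.
by rewrite /K [ell_yu _ (_ *: _)]linearZ_LR !scalerA; congr (_ *: _); ring.
Qed.

Lemma curv_cocycle M N :
  (forall p, (p < N)%N -> curv M N.+1 p = 0) -> l1_12 ell (curv M N.+1 N) = 0.
Proof.
move=> curv_lt; have := nested_bracket_sum N M.
rewrite nested_bracket_curv big_ord_recr /= big1 ?add0r => [|p _]; last first.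
  rewrite curv_lt // big1 ?scaler0 // => j _.
  by rewrite /natseqsum seqsum_eq0 ?scaler0 // => b _; rewrite raddf0 scaler0.
rewrite binn subnn scale1r big_ltn // big1_seq ?addr0 => [|j]; last first.
  rewrite mem_index_iota => /andP[_ /andP[j_gt0 _]].
  rewrite /natseqsum seqsum_eq0 ?scaler0 // => b sz_b.
  by apply: multinom_coef_ell_yu; rewrite size_map sz_b.
by rewrite /natseqsum /= /multinom_coef /multinom big_nil divr1 invr1 !scale1r.
Qed.

Lemma ObsE k :
  Obs ell u k = \sum_(2 <= i < k.+2)
    (i`!%:R)^-1 *: natseqsum k.+2 i (fun a => multinom_coef R k.+1 a *: ell_u a).
Proof.
apply: eq_big_nat => i _; rewrite /natseqsum -big_tuple_seqsum scaler_sumr big_mkcond /=.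
apply: eq_bigr => s _.
have -> : hval 1 (ell [seq hmk (u (val x)) | x <- s]) = ell_u (map val s).
  by rewrite /ell_u -map_comp.
rewrite /multinom_coef -sumnE.
case: ifP => [/andP[_ /eqP ->] | /negbT]; first by rewrite eqxx scalerA mulrC.
case: (sumn _ =P k.+1) => [_ | _]; last by rewrite scale0r scaler0.
rewrite andbT -has_predC => /hasP[x s_x]; rewrite /= -eqn0Ngt => /eqP x0.
by rewrite ell_u_mem0 ?scaler0 // -x0.
Qed.

Lemma curv_Obs M B k :
  (k.+2 <= M)%N -> (k.+2 <= B)%N -> curv M B k.+1 = l1_01 ell (u k.+1) + Obs ell u k.
Proof.
move=> leM leB; rewrite /curv big_ltn ?(leq_trans _ leB) // big_ltn ?(leq_trans _ leB) //.
rewrite (@big_cat_nat _ _ _ k.+2) //= ObsE.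
rewrite [X in _ + (_ + (_ + X))]big_nat_cond [X in _ + (_ + (_ + X))]big1 => [|i]; last first.
  case/andP=> /andP[lt_ki _] _; rewrite /natseqsum seqsum_eq0 ?scaler0 // => a sz_a.
  by apply: multinom_coef_ell_u; rewrite size_map sz_a.
rewrite addr0 /natseqsum /= ell_u_nil !scaler0 add0r invr1 scale1r; congr (_ + _).
  rewrite (bigD1 (Ordinal (leq_trans (ltnSn k.+1) leM))) //= big1 ?addr0 => [|x /eqP ne_x].
    rewrite /multinom_coef /multinom /= addn0 eqxx big_seq1.
    by rewrite divff ?scale1r ?natr_fact_neq0.
  rewrite /multinom_coef /= addn0; case: eqP => [e_x | _]; last by rewrite scale0r.
  by case: ne_x; apply: val_inj.
apply: eq_big_nat => i _; congr (_ *: _).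
apply: (natseqsum_widen (F := fun a => multinom_coef R k.+1 a *: ell_u a) _ leM) => a.
rewrite /multinom_coef -has_predC => /hasP[x a_x]; rewrite /= -leqNgt => gt_x.
case: eqP => [sum_a | _]; last by rewrite scale0r.
by move: (mem_leq_sumn a_x); rewrite sum_a leqNgt gt_x.
Qed.

Lemma l1_12_l1_01_u j : l1_12 ell (l1_01 ell (u j)) = 0.
Proof. by have := ell_u_jacobi [:: j]; rewrite /= big_bool /= ell_u_nil raddf0 addr0. Qed.

Lemma Obs_cocycle N :
  (forall p, (p < N)%N -> l1_01 ell (u p.+1) + Obs ell u p = 0) ->
  l1_12 ell (Obs ell u N) = 0.
Proof.
move=> MC_lt; have curv_lt p : (p < N.+1)%N -> curv N.+2 N.+2 p = 0.
  case: p => [_ | p lt_pN]; first exact: curv0.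
  by rewrite curv_Obs ?MC_lt // ltnW.
have := curv_cocycle curv_lt.
by rewrite curv_Obs // raddfD /= l1_12_l1_01_u add0r.
Qed.

Lemma cocycle_homotopy_exact (h1 : {linear 'rV[R]_(d 1) -> 'rV[R]_(d 0)})
    (h2 : {linear 'rV[R]_(d 2) -> 'rV[R]_(d 1)}) :
  (forall y, l1_01 ell (h1 y) + h2 (l1_12 ell y) = y) ->
  forall y, l1_12 ell y = 0 -> l1_01 ell (- h1 y) + y = 0.
Proof.
by move=> homotopy y cocycle_y; rewrite -{2}(homotopy y) cocycle_y raddf0 addr0 raddfN addNr.
Qed.

End FormalMaurerCartan.

Theorem proposition5p12 (R : realType) (d : int -> nat) (n : nat)
  (ell : seq (Linf_hom R d) -> Linf_hom R d)
  (h1 : {linear 'rV[R]_(d 1) -> 'rV[R]_(d 0)})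
  (h2 : {linear 'rV[R]_(d 2) -> 'rV[R]_(d 1)})
  (u : nat -> 'rV[R]_(d 0)) :
  d 0 = n ->
  is_Linf ell ->
  H1_vanishes ell ->
  (forall y : 'rV[R]_(d 1), l1_01 ell (h1 y) + h2 (l1_12 ell y) = y) ->
  u 0%N = 0 ->
  l1_01 ell (u 1%N) = 0 ->
  (forall k : nat, (1 <= k)%N -> u k.+1 = - h1 (Obs ell u k)) ->
  formal_MC ell u.
Proof.
move=> _ ellL _ homotopy u0 u1 u_rec; split=> //.
elim/ltn_ind=> k IH; case: k IH => [_ | k IH]; first by rewrite /Obs big_geq ?addr0.
rewrite u_rec //; apply: (cocycle_homotopy_exact ellL homotopy).
exact: (Obs_cocycle ellL u0 IH).
Qed.
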